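(* Let $A$ be a T-brace and let $a\in\zeta_2(\star,A)$. If $a$ has finite order in $(A,+)$ and the additive group of $\zeta_2(\star,A)$ is not periodic, then $x\star a\in\langle a\star a\rangle$ and $a\star x\in\langle a\star a\rangle$ for all $x\in A$, where $\langle a\star a\rangle$ denotes the cyclic subgroup of $(A,+)$ generated by $a\star a$.
   Context: A (left) brace is a set $A$ with two operations $+$ and $\cdot$ such that $(A,+)$ is an abelian group, $(A,\cdot)$ is a group, and $a(b+c)=ab+ac-a$ for all $a,b,c\in A$. Put $a\star b=ab-a-b$. A subbrace is a subset which is a subgroup of both $(A,+)$ and $(A,\cdot)$; a subbrace $L$ is an ideal if $a\star z, z\star a\in L$ for all $a\in A$, $z\in L$, and then the quotient brace $A/L$ is defined. $A$ is a T-brace if whenever $I$ is an ideal of $J$ and $J$ is an ideal of $A$, then $I$ is an ideal of $A$. The $\star$-center is $\zeta(\star,A)=\{a: a\star x=x\star a=0\ \forall x\}$; $\zeta_2(\star,A)$ is given by $\zeta_2(\star,A)/\zeta(\star,A)=\zeta(\star,A/\zeta(\star,A))$. *)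

From HB Require Import structures.
From mathcomp Require Import all_boot all_algebra.
Set Implicit Arguments. Unset Strict Implicit. Unset Printing Implicit Defensive.
Import GRing.Theory.
Local Open Scope ring_scope.

Record brace_on (V : zmodType) := BraceOn {
  bmul : V -> V -> V;
  bone : V;
  binv : V -> V;
  bmulA : forall a b c, bmul a (bmul b c) = bmul (bmul a b) c;
  bmul1l : forall a, bmul bone a = a;
  bmul1r : forall a, bmul a bone = a;
  bmulVl : forall a, bmul (binv a) a = bone;
  bmulVr : forall a, bmul a (binv a) = bone;
  bdistr : forall a b c, bmul a (b + c) = bmul a b + bmul a c - a
}.

Section BraceDefs.
Variables (V : zmodType) (B : brace_on V).

Definition bstar (a b : V) : V := bmul B a b - a - b.

Definition subbrace (S : V -> Prop) : Prop :=
  [/\ S 0, (forall x y, S x -> S y -> S (x + y)) & (forall x, S x -> S (- x))] /\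
  [/\ S (bone B), (forall x y, S x -> S y -> S (bmul B x y))
    & (forall x, S x -> S (binv B x))].

Definition ideal_in (J I : V -> Prop) : Prop :=
  [/\ subbrace I, (forall z, I z -> J z)
    & (forall a z, J a -> I z -> I (bstar a z) /\ I (bstar z a))].

Definition ideal (I : V -> Prop) : Prop := ideal_in (fun _ => True) I.

Definition T_brace : Prop :=
  forall I J : V -> Prop, ideal J -> ideal_in J I -> ideal I.

Definition zeta (a : V) : Prop := forall x, bstar a x = 0 /\ bstar x a = 0.

(* second star-center: a + zeta lies in the star-center of A/zeta, i.e.
   (a * x) + zeta = 0 + zeta and (x * a) + zeta = 0 + zeta for all x *)
Definition zeta2 (a : V) : Prop :=
  forall x, zeta (bstar a x) /\ zeta (bstar x a).

End BraceDefs.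

From HB Require Import structures.
From mathcomp Require Import all_boot all_algebra.
From Stdlib Require Import Classical.
Set Implicit Arguments. Unset Strict Implicit. Unset Printing Implicit Defensive.
Import GRing.Theory.
Local Open Scope ring_scope.

(* On ζ₂ the operation ⋆ is biadditive: every u ∈ ζ₂ is ⋆-central modulo ζ, and
   u + v differs from uv only by the ⋆-central element u ⋆ v. Hence, for a, d ∈ ζ₂
   with a ⋆ d = d ⋆ a = 0, J = ⟨a, d⟩ + ζ is an ideal of A and I = ⟨a + d, a ⋆ a, d ⋆ d⟩
   is an ideal of J; since A is a T-brace, I is an ideal of A, so x ⋆ (a + d) and
   (a + d) ⋆ x lie in I. Take for d a positive multiple of n b, where n a = 0 and
   b ∈ ζ₂ has infinite order; then a ⋆ d = d ⋆ a = 0.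
   If some multiple of d lies in ζ, take d ∈ ζ: then x ⋆ a = m (a + d) + j (a ⋆ a), and
   multiplying by n gives m = 0. Otherwise ⟨d⟩ ∩ ζ = 0; the pair (d, 0) shows
   x ⋆ d ∈ ⟨d ⋆ d⟩, the coefficient of a + d vanishes because everything else lies in ζ,
   and the remaining multiple of d ⋆ d is killed by n, hence is zero once d is rescaled
   so that d ⋆ d is 0 or of infinite order. *)

Section SubgroupPredicates.
Variable V : zmodType.

Definition addgroup_pred (P : V -> Prop) : Prop :=
  [/\ P 0, forall u v, P u -> P v -> P (u + v) & forall u, P u -> P (- u)].

Lemma addgroup_predMn P u n : addgroup_pred P -> P u -> P (u *+ n).
Proof. by case=> P0 PD _ Pu; elim: n => [|n IHn]; rewrite ?mulr0n // mulrS; apply: PD. Qed.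

Lemma addgroup_predMz P u k : addgroup_pred P -> P u -> P (u *~ k).
Proof.
move=> PG Pu; have [_ _ PN] := PG.
case: k => n; rewrite ?NegzE ?mulrNz -pmulrn; last apply: PN;
  exact: addgroup_predMn.
Qed.

Lemma raddfMz_in (W : zmodType) P (f : V -> W) u k :
    addgroup_pred P -> (forall v w, P v -> P w -> f (v + w) = f v + f w) ->
  P u -> f (u *~ k) = f u *~ k.
Proof.
move=> PG fD Pu; have [P0 _ PN] := PG.
have f0 : f 0 = 0 by apply: (addrI (f 0)); rewrite -fD // !addr0.
have fMn n : f (u *+ n) = f u *+ n.
  elim: n => [|n IHn]; rewrite ?mulr0n // !mulrS fD ?IHn //.
  exact: addgroup_predMn.
case: k => n; rewrite -?pmulrn ?fMn // NegzE !mulrNz -!pmulrn -fMn.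
have Pun := addgroup_predMn n.+1 PG Pu.
by apply/eqP; rewrite -addr_eq0 -fD ?addNr ?f0 //; apply: PN.
Qed.

Lemma addgroup_pred_torsion n : addgroup_pred (fun v : V => v *+ n = 0).
Proof.
split=> [|u v un vn|u un]; first exact: mul0rn.
  by rewrite mulrnDl un vn addr0.
by rewrite mulNrn un oppr0.
Qed.

Definition zindep (P : V -> Prop) (d : V) : Prop :=
  forall m : int, P (d *~ m) -> m = 0.

Lemma zindepP P v :
  addgroup_pred P -> (forall n, (0 < n)%N -> ~ P (v *+ n)) -> zindep P v.
Proof.
move=> [_ _ PN] Pv [] n; last first.
  by rewrite NegzE mulrNz -pmulrn => /PN; rewrite opprK => /(Pv n.+1 isT).
by case: n => [//|n]; rewrite -pmulrn => /(Pv n.+1 isT).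
Qed.

Lemma zindep_mulrn P u m n : (0 < n)%N -> zindep P u -> P (u *~ m *+ n) -> m = 0.
Proof.
move=> n_gt0 uP; rewrite pmulrn -mulrzA => /uP /eqP.
by rewrite mulf_eq0 eqz_nat eqn0Ngt n_gt0 orbF => /eqP.
Qed.

Lemma zindepMn P u n : (0 < n)%N -> zindep P u -> zindep P (u *+ n).
Proof. by move=> n_gt0 uP m; rewrite pmulrn mulrzAC -pmulrn; apply: zindep_mulrn. Qed.

Lemma zindepD_torsion P a d n :
  addgroup_pred P -> (0 < n)%N -> a *+ n = 0 -> zindep P d -> zindep P (a + d).
Proof.
move=> PG n_gt0 an dP m /(addgroup_predMn n PG).
by rewrite mulrzDl mulrnDl pmulrn mulrzAC -pmulrn an mul0rz add0r; apply: zindep_mulrn.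
Qed.

Definition zspan3 (u v w y : V) : Prop :=
  exists m j l : int, y = u *~ m + v *~ j + w *~ l.

Lemma zspan3_addgroup u v w : addgroup_pred (zspan3 u v w).
Proof.
split=> [|_ _ [m [j [l ->]]] [m' [j' [l' ->]]]|_ [m [j [l ->]]]].
- by exists 0, 0, 0; rewrite !mulr0z !addr0.
- exists (m + m'), (j + j'), (l + l'); rewrite !mulrzDr.
  by rewrite [LHS]+%R.[AC (3*3) ((1*4)*(2*5)*(3*6))].
- by exists (- m), (- j), (- l); rewrite !mulrNz !opprD.
Qed.

Lemma zspan3_zindep P u v w y :
    addgroup_pred P -> zindep P u -> P v -> P w -> P y -> zspan3 u v w y ->
  exists j l : int, y = v *~ j + w *~ l.
Proof.
move=> PG uP Pv Pw Py [m [j [l Ey]]]; exists j, l; have [_ PD PN] := PG.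
suff m0 : m = 0 by rewrite Ey m0 mulr0z add0r.
apply: uP; have -> : u *~ m = y - w *~ l - v *~ j by rewrite Ey !addrK.
by apply: (PD); first apply: (PD) => //; apply: PN; apply: addgroup_predMz.
Qed.

End SubgroupPredicates.

Section Brace.
Variables (V : zmodType) (B : brace_on V).
Local Notation "x ⋆ y" := (bstar B x y) (at level 40, left associativity).
Local Notation zeta := (zeta B).
Local Notation zeta2 := (zeta2 B).

Lemma bmulr0 a : bmul B a 0 = a.
Proof.
have := bdistr B a 0 0; rewrite addr0 -addrA -{1}[bmul B a 0]addr0 => /addrI.
by move/esym/eqP; rewrite subr_eq0 => /eqP.
Qed.

Lemma bone0 : bone B = 0.
Proof. by rewrite -(bmulr0 (bone B)) bmul1l. Qed.

Lemma bmul0r a : bmul B 0 a = a.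
Proof. by rewrite -bone0 bmul1l. Qed.

Lemma bmulE a b : bmul B a b = a + b + a ⋆ b.
Proof. by rewrite /bstar -[bmul B a b - a - b]addrA -opprD addrC addrA subrr add0r. Qed.

Lemma bstarr0 a : a ⋆ 0 = 0.
Proof. by rewrite /bstar bmulr0 subr0 subrr. Qed.

Lemma bstarDr a x y : a ⋆ (x + y) = a ⋆ x + a ⋆ y.
Proof. by rewrite /bstar bdistr [RHS]addrACA -opprD (addrACA (bmul B a x)) addrA. Qed.

Fact bstar_is_nmod_morphism a : nmod_morphism (bstar B a).
Proof. by split; [exact: bstarr0 | exact: bstarDr]. Qed.

HB.instance Definition _ a :=
  GRing.isNmodMorphism.Build V V (bstar B a) (bstar_is_nmod_morphism a).

Lemma bstar0r x : 0 ⋆ x = 0.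
Proof. by rewrite /bstar bmul0r subr0 subrr. Qed.

Lemma bstarM x y z : bmul B x y ⋆ z = x ⋆ (y ⋆ z) + x ⋆ z + y ⋆ z.
Proof.
rewrite {1}/bstar -bmulA [bmul B y z]bmulE; set u := y ⋆ z; clearbody u.
rewrite !bdistr [x ⋆ u]/bstar [x ⋆ z]/bstar [RHS]addrAC subrK.
by rewrite [LHS]+%R.[ACl 1*6*2*3*4*5*7] subrr add0r [LHS]+%R.[ACl 3*4*1*2*5] !addrA.
Qed.

Lemma addr_binv u : u + binv B u + u ⋆ binv B u = 0.
Proof. by rewrite -bmulE bmulVr bone0. Qed.

Lemma bstarDl_zeta w z x : zeta z -> (w + z) ⋆ x = w ⋆ x.
Proof.
move=> zz; have [zx zw] := (zz x, zz w).
by rewrite -[w + z]addr0 -zw.2 -bmulE bstarM zx.1 raddf0 add0r addr0.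
Qed.

Lemma zeta_addgroup : addgroup_pred zeta.
Proof.
split=> [x|z1 z2 z1z z2z x|z zz x].
- by rewrite bstar0r raddf0.
- by rewrite bstarDl_zeta // raddfD /= (z1z x).1 (z1z x).2 (z2z x).2 addr0.
- by rewrite -(bstarDl_zeta _ x zz) addNr bstar0r raddfN /= (zz x).2 oppr0.
Qed.

Section LeftCentral.
Variables u v : V.
Hypotheses (uz : forall y, zeta (u ⋆ y)) (vz : forall y, zeta (v ⋆ y)).

Lemma bstarDl x : (u + v) ⋆ x = u ⋆ x + v ⋆ x.
Proof.
have [_ _ zN] := zeta_addgroup.
(* u + v = uv - u ⋆ v, and the ⋆-central summand - u ⋆ v does not change ⋆ x. *)
rewrite -[u + v](addrK (u ⋆ v)) -bmulE bstarDl_zeta; last exact/zN/uz.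
by rewrite bstarM (vz x u).2 add0r.
Qed.

Lemma binvE : binv B u = - u + u ⋆ u.
Proof.
have /eqP := addr_binv u; rewrite addrAC addrC addr_eq0 opprD => /eqP e.
have w_eq : u ⋆ binv B u = - (u ⋆ u).
  by rewrite {1}e raddfB /= raddfN /= (uz _ u).2 subr0.
by rewrite {1}e w_eq opprK.
Qed.

Lemma bstarNl x : (- u) ⋆ x = - (u ⋆ x).
Proof.
have [_ _ zN] := zeta_addgroup.
rewrite -[- u](addrK (u ⋆ u)) -binvE bstarDl_zeta; last exact/zN/uz.
apply/eqP; rewrite -addr_eq0; apply/eqP.
by have := bstarM (binv B u) u x; rewrite bmulVl bone0 bstar0r (uz x _).2 add0r.
Qed.

End LeftCentral.

Lemma zeta2_zeta z : zeta z -> zeta2 z.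
Proof. by have [z0 _ _] := zeta_addgroup; move=> zz x; rewrite (zz x).1 (zz x).2. Qed.

Lemma zeta2_bstarl u : zeta2 u -> forall y, zeta (u ⋆ y).
Proof. by move=> uz y; case: (uz y). Qed.

Lemma zeta2_bstarr u : zeta2 u -> forall y, zeta (y ⋆ u).
Proof. by move=> uz y; case: (uz y). Qed.

Lemma zeta2_addgroup : addgroup_pred zeta2.
Proof.
have [z0 zD zN] := zeta_addgroup.
split=> [|u v uz vz|u uz] x.
- by rewrite bstar0r raddf0.
- have [[ux xu] [vx xv]] := (uz x, vz x).
  rewrite (bstarDl (zeta2_bstarl uz) (zeta2_bstarl vz)) raddfD /=.
  by split; apply: zD.
- have [ux xu] := uz x.
  by rewrite (bstarNl (zeta2_bstarl uz)) raddfN /=; split; apply: zN.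
Qed.

Lemma bstarMzl u k x : zeta2 u -> (u *~ k) ⋆ x = (u ⋆ x) *~ k.
Proof.
move=> uz; apply: (raddfMz_in (f := bstar B ^~ x) k zeta2_addgroup _ uz).
by move=> v w vz wz; apply: bstarDl; apply: zeta2_bstarl.
Qed.

Lemma bstarMnl u n x : zeta2 u -> (u *+ n) ⋆ x = (u ⋆ x) *+ n.
Proof. by rewrite !pmulrn; apply: bstarMzl. Qed.

Lemma subbrace_of_star_closed P :
    addgroup_pred P -> (forall u, P u -> forall y, zeta (u ⋆ y)) ->
    (forall u v, P u -> P v -> P (u ⋆ v)) ->
  subbrace B P.
Proof.
move=> PG Pz Pstar; split=> //; have [P0 PD PN] := PG; split.
- by rewrite bone0.
- by move=> u v Pu Pv; rewrite bmulE; apply: (PD); [apply: PD | apply: Pstar].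
- by move=> u Pu; rewrite binvE; [apply: PD; [apply: PN | apply: Pstar] | exact: Pz Pu].
Qed.

Definition zspan2_zeta (a d y : V) : Prop :=
  exists (p q : int) (z : V), zeta z /\ y = a *~ p + d *~ q + z.

Lemma zspan2_zeta_addgroup a d : addgroup_pred (zspan2_zeta a d).
Proof.
have [z0 zD zN] := zeta_addgroup.
split=> [|_ _ [p [q [z [zz ->]]]] [p' [q' [z' [zz' ->]]]]|_ [p [q [z [zz ->]]]]].
- by exists 0, 0, 0; rewrite !mulr0z !addr0.
- exists (p + p'), (q + q'), (z + z'); split; first exact: zD.
  by rewrite !mulrzDr [LHS]+%R.[AC (3*3) ((1*4)*(2*5)*(3*6))].
- by exists (- p), (- q), (- z); rewrite !mulrNz !opprD; split; first exact: zN.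
Qed.

Section TwoGenerators.
Variables a d : V.
Hypotheses (za : zeta2 a) (zd : zeta2 d).

Lemma zeta_zspan2_zeta z : zeta z -> zspan2_zeta a d z.
Proof. by exists 0, 0, z; rewrite !mulr0z !add0r. Qed.

Lemma zeta2_zspan2_zeta y : zspan2_zeta a d y -> zeta2 y.
Proof.
have [_ z2D _] := zeta2_addgroup.
move=> [p [q [z [zz ->]]]]; apply: (z2D); last exact: zeta2_zeta.
by apply: z2D; apply: addgroup_predMz zeta2_addgroup _.
Qed.

Lemma ideal_zspan2_zeta : ideal B (zspan2_zeta a d).
Proof.
split=> // [|x y _ /zeta2_zspan2_zeta yz].
- apply: subbrace_of_star_closed (zspan2_zeta_addgroup a d) _ _.
    by move=> y /zeta2_zspan2_zeta /zeta2_bstarl.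
  by move=> u v /zeta2_zspan2_zeta uz _; exact/zeta_zspan2_zeta/zeta2_bstarl.
- by split; apply: zeta_zspan2_zeta; [apply: zeta2_bstarr | apply: zeta2_bstarl].
Qed.

Hypotheses (ad : a ⋆ d = 0) (da : d ⋆ a = 0).

Lemma bstar_zspan2_zeta_l p q z : zeta z -> (a *~ p + d *~ q + z) ⋆ a = (a ⋆ a) *~ p.
Proof.
move=> zz; have [zap zdq] := (addgroup_predMz p zeta2_addgroup za,
                              addgroup_predMz q zeta2_addgroup zd).
rewrite bstarDl_zeta // (bstarDl (zeta2_bstarl zap) (zeta2_bstarl zdq)).
by rewrite !bstarMzl // da mul0rz addr0.
Qed.

Lemma bstar_zspan2_zeta_r p q z : zeta z -> a ⋆ (a *~ p + d *~ q + z) = (a ⋆ a) *~ p.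
Proof. by move=> zz; rewrite !raddfD /= !raddfMz /= ad (zz a).2 mul0rz !addr0. Qed.

End TwoGenerators.

Section Ideal.
Variables a d : V.
Hypotheses (za : zeta2 a) (zd : zeta2 d) (ad : a ⋆ d = 0) (da : d ⋆ a = 0).
Local Notation t := (a ⋆ a).
Local Notation w := (d ⋆ d).

Lemma bstar_zspan2_zeta_add p q z : zeta z ->
  (a *~ p + d *~ q + z) ⋆ (a + d) = t *~ p + w *~ q /\
  (a + d) ⋆ (a *~ p + d *~ q + z) = t *~ p + w *~ q.
Proof.
move=> zz; have swap : a *~ p + d *~ q + z = d *~ q + a *~ p + z.
  by rewrite (addrC (a *~ p)).
rewrite raddfD /= (bstarDl (zeta2_bstarl za) (zeta2_bstarl zd)).
rewrite bstar_zspan2_zeta_l // bstar_zspan2_zeta_r // swap.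
by rewrite bstar_zspan2_zeta_l // bstar_zspan2_zeta_r.
Qed.

Lemma ideal_in_zspan3 : ideal_in B (zspan2_zeta a d) (zspan3 (a + d) t w).
Proof.
have [zt zw] := (zeta2_bstarl za a, zeta2_bstarl zd d).
have [z0 zD _] := zeta_addgroup.
have IJ u : zspan3 (a + d) t w u -> zspan2_zeta a d u.
  move=> [m [j [l ->]]]; exists m, m, (t *~ j + w *~ l); rewrite mulrzDl addrA.
  by split=> //; apply: zD; apply: addgroup_predMz zeta_addgroup _.
have IJ_star v u :
  zspan2_zeta a d v -> zspan3 (a + d) t w u ->
  zspan3 (a + d) t w (v ⋆ u) /\ zspan3 (a + d) t w (u ⋆ v).
  move=> [p [q [z [zz ->]]]] [m [j [l ->]]].
  have [vs sv] := bstar_zspan2_zeta_add p q zz.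
  have tw_m : (t *~ p + w *~ q) *~ m = (a + d) *~ 0 + t *~ (p * m) + w *~ (q * m).
    by rewrite mulr0z add0r mulrzDl !mulrzA.
  split; exists 0, (p * m), (q * m); rewrite -tw_m.
    by rewrite !raddfD /= !raddfMz /= vs (zt _).2 (zw _).2 !mul0rz !addr0.
  rewrite -addrA bstarDl_zeta; last by apply: zD; apply: addgroup_predMz zeta_addgroup _.
  by rewrite bstarMzl ?sv //; have [_ z2D _] := zeta2_addgroup; apply: z2D.
split=> //.
apply: subbrace_of_star_closed (zspan3_addgroup _ _ _) _ _ => [u Iu x|u v Iu Iv].
  exact: zeta2_bstarl (zeta2_zspan2_zeta za zd (IJ u Iu)) x.
by case: (IJ_star u v (IJ u Iu) Iv).
Qed.

End Ideal.

Lemma T_brace_bstar_zspan3 a d :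
    T_brace B -> zeta2 a -> zeta2 d -> a ⋆ d = 0 -> d ⋆ a = 0 ->
  forall x, zspan3 (a + d) (a ⋆ a) (d ⋆ d) (x ⋆ (a + d)) /\
            zspan3 (a + d) (a ⋆ a) (d ⋆ d) ((a + d) ⋆ x).
Proof.
move=> TB za zd ad da x.
have [_ _ Istar] := TB _ _ (ideal_zspan2_zeta za zd) (ideal_in_zspan3 za zd ad da).
by apply: Istar => //; exists 1, 0, 0; rewrite mulr1z !mulr0z !addr0.
Qed.

Section Torsion.
Variables (a : V) (n : nat).
Hypotheses (za : zeta2 a) (n_gt0 : (0 < n)%N) (an : a *+ n = 0).
Local Notation t := (a ⋆ a).
Local Notation torsion := (fun v : V => v *+ n = 0).

Lemma bstar_torsion_l x : (x ⋆ a) *+ n = 0.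
Proof. by rewrite -raddfMn /= an raddf0. Qed.

Lemma bstar_torsion_r x : (a ⋆ x) *+ n = 0.
Proof. by rewrite -bstarMnl // an bstar0r. Qed.

Lemma bstar_torsion_mulrn b : zeta2 b -> a ⋆ (b *+ n) = 0 /\ (b *+ n) ⋆ a = 0.
Proof.
move=> zb; rewrite raddfMn /= bstarMnl //; split; last exact: bstar_torsion_l.
by rewrite -bstarMnl // an bstar0r.
Qed.

Lemma bstar_cyclic_zeta d :
    T_brace B -> zeta d -> zindep torsion d ->
  forall x, (exists k : int, x ⋆ a = t *~ k) /\ (exists k : int, a ⋆ x = t *~ k).
Proof.
move=> TB zd dP x.
have [xI Ix] := T_brace_bstar_zspan3 TB za (zeta2_zeta zd) (zd a).2 (zd a).1 x.
rewrite raddfD /= (zd x).2 addr0 (zd d).1 in xI.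
rewrite bstarDl_zeta // (zd d).1 in Ix.
have adP := zindepD_torsion (addgroup_pred_torsion V n) n_gt0 an dP.
have tn := bstar_torsion_l a.
have cyclic y : y *+ n = 0 -> zspan3 (a + d) t 0 y -> exists k : int, y = t *~ k.
  move=> yn /(zspan3_zindep (addgroup_pred_torsion V n) adP tn (mul0rn _ _) yn).
  by move=> [j [l ->]]; exists j; rewrite mul0rz addr0.
by split; [exact: cyclic (bstar_torsion_l x) xI | exact: cyclic (bstar_torsion_r x) Ix].
Qed.

Lemma bstar_cyclic_zindep d :
    T_brace B -> zeta2 d -> a ⋆ d = 0 -> d ⋆ a = 0 -> zindep zeta d ->
    d ⋆ d = 0 \/ zindep torsion (d ⋆ d) ->
  forall x, (exists k : int, x ⋆ a = t *~ k) /\ (exists k : int, a ⋆ x = t *~ k).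
Proof.
move=> TB zd ad da dZ; set w := d ⋆ d => w_tf x.
have [z0 zD _] := zeta_addgroup; have [z2_0 _ _] := zeta2_addgroup.
have [zt zw] := (zeta2_bstarl za a, zeta2_bstarl zd d).
have [xI Ix] := T_brace_bstar_zspan3 TB za zd ad da x.
rewrite raddfD /= in xI.
rewrite (bstarDl (zeta2_bstarl za) (zeta2_bstarl zd)) in Ix.
have [xJ Jx] := T_brace_bstar_zspan3 TB zd z2_0 (raddf0 _) (bstar0r d) x.
rewrite addr0 bstar0r in xJ Jx.
have adZ := zindepD_torsion zeta_addgroup n_gt0 an dZ.
have w_torsion L : w *~ L *+ n = 0 -> w *~ L = 0.
  by case: w_tf => [-> | wP]; [rewrite mul0rz | move=> /wP ->; rewrite mulr0z].
have cyclic y e :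
    zeta y -> y *+ n = 0 -> zeta e -> zspan3 d w 0 e -> zspan3 (a + d) t w (y + e) ->
  exists k : int, y = t *~ k.
  move=> zy yn ze /(zspan3_zindep zeta_addgroup dZ zw z0 ze) [j' [l' Ee]].
  move=> /(zspan3_zindep zeta_addgroup adZ zt zw (zD _ _ zy ze)) [j [l Ey]].
  have Ly : y = t *~ j + w *~ (l - j').
    by rewrite mulrzBr addrA -Ey Ee mul0rz addr0 addrK.
  exists j.
  rewrite Ly w_torsion ?addr0 //; move: yn; rewrite Ly mulrnDl.
  by rewrite (addgroup_predMz j (addgroup_pred_torsion V n) (bstar_torsion_l a)) add0r.
split; first exact: cyclic (zeta2_bstarr za x) (bstar_torsion_l x) (zeta2_bstarr zd x) xJ xI.
exact: cyclic (zeta2_bstarl za x) (bstar_torsion_r x) (zeta2_bstarl zd x) Jx Ix.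
Qed.

Lemma exists_mulrn_bstar_self d : zeta2 d ->
  exists2 e, (0 < e)%N &
    (d *+ e) ⋆ (d *+ e) = 0 \/ zindep torsion ((d *+ e) ⋆ (d *+ e)).
Proof.
move=> zd.
have [[e e_gt0 we] | w_free] := classic (exists2 e, (0 < e)%N & (d ⋆ d) *+ e = 0).
  by exists e => //; left; rewrite raddfMn /= bstarMnl // we mul0rn.
exists 1%N => //; right; rewrite mulr1n.
apply: zindepP (addgroup_pred_torsion V n) _ => j j_gt0 wj; apply: w_free.
by exists (j * n)%N; [rewrite muln_gt0 j_gt0 n_gt0 | rewrite mulrnA].
Qed.

End Torsion.

End Brace.

Theorem lemma4p4 (V : zmodType) (B : brace_on V) :
  T_brace B ->
  forall a : V, zeta2 B a ->
  (exists n : nat, (0 < n)%N /\ a *+ n = 0) ->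
  (exists b : V, zeta2 B b /\ forall n : nat, (0 < n)%N -> b *+ n <> 0) ->
  forall x : V,
    (exists k : int, bstar B x a = (bstar B a a) *~ k) /\
    (exists k : int, bstar B a x = (bstar B a a) *~ k).
Proof.
move=> TB a za [n [n_gt0 an]] [b [zb b_inf]].
have zd0 : zeta2 B (b *+ n) by apply: addgroup_predMn (zeta2_addgroup B) _.
have [ad0 d0a] := bstar_torsion_mulrn za an zb.
have [[k k_gt0 zdk] | d0Z] := classic (exists2 k, (0 < k)%N & zeta B (b *+ n *+ k)).
  apply: (bstar_cyclic_zeta za n_gt0 an TB zdk).
  apply: zindepP (addgroup_pred_torsion V n) _ => j j_gt0; rewrite -!mulrnA.
  by apply: b_inf; rewrite !muln_gt0 n_gt0 k_gt0 j_gt0.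
have [e e_gt0 w_tf] := exists_mulrn_bstar_self n_gt0 zd0.
apply: (bstar_cyclic_zindep za n_gt0 an TB) w_tf.
- exact: addgroup_predMn (zeta2_addgroup B) _.
- by rewrite raddfMn /= ad0 mul0rn.
- by rewrite bstarMnl // d0a mul0rn.
- apply: zindepMn e_gt0 _; apply: zindepP (zeta_addgroup B) _ => j j_gt0 zj.
  by apply: d0Z; exists j.
Qed.
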